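(* Let $G$ be a map graph with a corresponding planar bipartite graph $B$, let $\mathcal{D}=(T,\beta_{\mathcal{D}})$ be a nice tree decomposition of $B$, and let $\mathcal{D}'=(T,\beta_{\mathcal{D}'})$ be derived from $\mathcal{D}$ as described in the context. Then for every node $t\in V(T)$, every edge of $G$ with one endpoint in $\gamma_{\mathcal{D}'}(t)$ and the other endpoint in $V(G)\setminus\gamma_{\mathcal{D}'}(t)$ either is incident with a vertex of $\mathsf{Original}(t)$, or belongs to $E(K)$ (the edge set of the clique $K$) for some special clique $K\in\mathsf{Cliques}(t)$.
   Context: All graphs are finite and simple. For a bipartite graph $B$ with bipartition $V(B)=W\uplus U$, the half-square of $B$ is the graph on $W$ in which two vertices are adjacent iff they are at distance exactly $2$ in $B$. A graph $G$ is a map graph iff it is the half-square of some planar bipartite graph $B$; such $B$ (with $W=V(G)$) is a corresponding planar bipartite graph, and $S(G)=U$ is the set of special vertices; for $s\in S(G)$, $N_B(s)$ is a clique of $G$ called a special clique. A tree decomposition $(T,\beta)$: rooted tree, bags covering all vertices and edges, each vertex's nodes inducing a connected subtree. $\gamma_{\mathcal{D}}(t)$ (resp. $\gamma_{\mathcal{D}'}(t)$) is the union of bags of $\mathcal{D}$ (resp. $\mathcal{D}'$) at $t$ and its descendants. A nice tree decomposition has empty root bag and leaf, introduce, forget and join nodes in the standard sense. The derived decomposition $\mathcal{D}'$ has the same tree and $\beta_{\mathcal{D}'}(t)=(\beta_{\mathcal{D}}(t)\cap V(G))\cup\bigcup_{s\in\beta_{\mathcal{D}}(t)\cap S(G)}(N_B(s)\cap\gamma_{\mathcal{D}}(t))$.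 $\mathsf{Original}(t)=\beta_{\mathcal{D}}(t)\cap\beta_{\mathcal{D}'}(t)$, $\mathsf{Fake}(t)=\beta_{\mathcal{D}'}(t)\setminus\beta_{\mathcal{D}}(t)$, $\mathsf{Cliques}(t)=\{N_B(s): s\in S(G)\cap\beta_{\mathcal{D}}(t)\}$. *)

From mathcomp Require Import all_boot.
Set Implicit Arguments. Unset Strict Implicit. Unset Printing Implicit Defensive.

Definition connected_in (V : finType) (e : rel V) (S : {set V}) : Prop :=
  forall x y, x \in S -> y \in S ->
    connect [rel a c | [&& a \in S, c \in S & e a c]] x y.

Definition is_minor (VH VG : finType) (eH : rel VH) (eG : rel VG) : Prop :=
  exists phi : VH -> {set VG},
    [/\ forall i, phi i != set0,
        forall i j, i != j -> [disjoint phi i & phi j],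
        forall i, connected_in eG (phi i)
      & forall i j, eH i j -> exists x y, [/\ x \in phi i, y \in phi j & eG x y]].

Definition K5 : rel 'I_5 := fun i j => i != j.
Definition K33 : rel ('I_3 + 'I_3)%type := fun x y =>
  match x, y with inl _, inr _ | inr _, inl _ => true | _, _ => false end.

(* Planarity, via Wagner's theorem: no K5 and no K3,3 minor. *)
Definition planar (V : finType) (e : rel V) : Prop :=
  ~ is_minor K5 e /\ ~ is_minor K33 e.

Definition bip_rel (W U : finType) (b : W -> U -> bool) : rel (W + U)%type :=
  fun x y => match x, y with
             | inl w, inr u => b w u
             | inr u, inl w => b w u
             | _, _ => false end.

(* Half-square of B on W: distinct vertices with a common neighbour in U
   (= at distance exactly 2 in B). *)
Definition half_square (W U : finType) (b : W -> U -> bool) : rel W :=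
  fun x y => (x != y) && [exists u, b x u && b y u].

Definition nbhB (W U : finType) (b : W -> U -> bool) (s : U) : {set W} :=
  [set w | b w s].

Definition rooted_tree (N : finType) (r : N) (parent : N -> N) : Prop :=
  parent r = r /\ forall t, fconnect parent t r.

(* t' is a descendant of t (t itself included). *)
Definition is_desc (N : finType) (parent : N -> N) (t' t : N) : bool :=
  fconnect parent t' t.

Definition children (N : finType) (r : N) (parent : N -> N) (t : N) : {set N} :=
  [set c | (c != r) && (parent c == t)].

Definition tree_adj (N : finType) (parent : N -> N) : rel N :=
  fun x y => (x != y) && ((parent x == y) || (parent y == x)).

Definition tree_decomposition (V N : finType) (e : rel V) (r : N)
    (parent : N -> N) (beta : N -> {set V}) : Prop :=
  [/\ rooted_tree r parent,
      forall v, exists t, v \in beta t,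
      forall x y, e x y -> exists t, (x \in beta t) && (y \in beta t)
    & forall v, connected_in (tree_adj parent) [set t | v \in beta t]].

Definition nice_node (V N : finType) (r : N) (parent : N -> N)
    (beta : N -> {set V}) (t : N) : Prop :=
  let ch := children r parent t in
  (ch = set0 /\ beta t = set0)
  \/
  (exists c v, [/\ ch = [set c], v \notin beta c & beta t = v |: beta c])
  \/
  (exists c v, [/\ ch = [set c], v \in beta c & beta t = beta c :\ v])
  \/
  (exists c1 c2, [/\ c1 != c2, ch = [set c1; c2], beta c1 = beta t & beta c2 = beta t]).

Definition nice_tree_decomposition (V N : finType) (e : rel V) (r : N)
    (parent : N -> N) (beta : N -> {set V}) : Prop :=
  [/\ tree_decomposition e r parent beta, beta r = set0
    & forall t, nice_node r parent beta t].

Definition gamma (V N : finType) (parent : N -> N) (beta : N -> {set V}) (t : N)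
  : {set V} := \bigcup_(t' | is_desc parent t' t) beta t'.

Definition derived_bag (W U N : finType) (b : W -> U -> bool) (parent : N -> N)
    (beta : N -> {set (W + U)%type}) (t : N) : {set W} :=
  [set w | inl w \in beta t] :|:
  \bigcup_(s | inr s \in beta t) (nbhB b s :&: [set w | inl w \in gamma parent beta t]).

Definition gamma' (W U N : finType) (b : W -> U -> bool) (parent : N -> N)
    (beta : N -> {set (W + U)%type}) (t : N) : {set W} :=
  \bigcup_(t' | is_desc parent t' t) derived_bag b parent beta t'.

Definition Original (W U N : finType) (b : W -> U -> bool) (parent : N -> N)
    (beta : N -> {set (W + U)%type}) (t : N) : {set W} :=
  [set w | inl w \in beta t] :&: derived_bag b parent beta t.

Definition Cliques (W U N : finType) (b : W -> U -> bool)
    (beta : N -> {set (W + U)%type}) (t : N) : {set {set W}} :=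
  [set nbhB b s | s in [set s | inr s \in beta t]].

Definition in_clique_edges (W : finType) (G : rel W) (K : {set W}) (x y : W) : Prop :=
  [/\ G x y, x \in K & y \in K].

From mathcomp Require Import all_boot.

Set Implicit Arguments.
Unset Strict Implicit.
Unset Printing Implicit Defensive.

(* A vertex of B lying in gamma_D(t) but not in beta_D(t) occurs
   only in bags below t, since its bags form a subtree.  Let xy be an edge of G
   leaving gamma_D'(t) = V(G) ∩ gamma_D(t), with common neighbour s in B.  If
   x is not in beta_D(t), the bag holding {x, s} lies below t, so s is in
   gamma_D(t); if s were not in beta_D(t), the bag holding {y, s} would also lie
   below t and put y into gamma_D(t).  Hence x is original or s is in
   beta_D(t), making xy an edge of the clique N_B(s). *)

Section RootedTree.

Variables (N : finType) (parent : N -> N).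

Lemma fconnect_parent (a t : N) :
  fconnect parent a t -> a != t -> fconnect parent (parent a) t.
Proof.
move=> /connectP [[|z p]] /=; first by move=> _ -> /eqP.
move=> /andP [/eqP <- path_p] -> _.
by apply/connectP; exists p.
Qed.

Lemma connected_in_desc (S : {set N}) (t a c : N) :
  t \notin S -> connected_in (tree_adj parent) S -> a \in S -> c \in S ->
  is_desc parent a t -> is_desc parent c t.
Proof.
move=> tNS conn_S aS cS; have /connectP [p] := conn_S a c aS cS.
elim: p a {aS} => [|z p IH] a /=; first by move=> _ ->.
move=> /andP [/and3P [aS _ /andP [_ adj_az]] path_p] c_last a_t.
apply: IH path_p c_last _; case/orP: adj_az => /eqP adj_az.
- rewrite -adj_az; apply: fconnect_parent => //.
  by apply: contraNneq tNS => <-.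
- by apply: connect_trans a_t; apply: connect1; rewrite /= adj_az.
Qed.

End RootedTree.

Section Gamma.

Variables (V N : finType) (parent : N -> N) (beta : N -> {set V}).

Lemma gammaP (t : N) (v : V) :
  reflect (exists2 t', is_desc parent t' t & v \in beta t')
          (v \in gamma parent beta t).
Proof. by apply: (iffP bigcupP) => -[t' dt' vt']; exists t'. Qed.

Lemma gamma_desc_sub (t t' : N) :
  is_desc parent t' t -> gamma parent beta t' \subset gamma parent beta t.
Proof.
move=> dt'; apply/subsetP => v /gammaP [t'' dt'' vt''].
by apply/gammaP; exists t'' => //; apply: connect_trans dt'' dt'.
Qed.

Lemma gamma_bag_desc (e : rel V) (r : N) (t t' : N) (v : V) :
  tree_decomposition e r parent beta ->
  v \in gamma parent beta t -> v \notin beta t -> v \in beta t' ->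
  is_desc parent t' t.
Proof.
case=> _ _ _ conn_bags /gammaP [t0 dt0 vt0] vNt vt'.
apply: (connected_in_desc (S := [set s | v \in beta s])) dt0;
  by rewrite ?inE.
Qed.

End Gamma.

Section Derived.

Variables (W U N : finType) (b : W -> U -> bool) (parent : N -> N).
Variable beta : N -> {set (W + U)%type}.

Lemma gamma'E (t : N) :
  gamma' b parent beta t = [set w | inl w \in gamma parent beta t].
Proof.
apply/setP => w; rewrite inE; apply/bigcupP/gammaP => -[t' dt' wt'].
- case/setUP: wt' => [|/bigcupP [s _ /setIP [_]]]; rewrite inE.
    by exists t'.
  by move/(subsetP (gamma_desc_sub beta dt'))/gammaP.
- by exists t' => //; apply/setUP; left; rewrite inE.
Qed.

Lemma OriginalE (t : N) :
  Original b parent beta t = [set w | inl w \in beta t].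
Proof.
apply/setP => w; rewrite inE; apply/setIP/idP => [[]|wt]; first by rewrite inE.
by split; [rewrite inE | apply/setUP; left; rewrite inE].
Qed.

End Derived.

Theorem lemma16 (W U N : finType) (G : rel W) (b : W -> U -> bool)
    (r : N) (parent : N -> N) (beta : N -> {set (W + U)%type}) :
  (* G is a map graph with corresponding planar bipartite graph B = (W ⊎ U, b) *)
  planar (bip_rel b) ->
  (forall x y, G x y = half_square b x y) ->
  (* D = (T, beta) is a nice tree decomposition of B *)
  nice_tree_decomposition (bip_rel b) r parent beta ->
  forall (t : N) (x y : W),
    G x y -> x \in gamma' b parent beta t -> y \notin gamma' b parent beta t ->
    (x \in Original b parent beta t \/ y \in Original b parent beta t)
    \/ (exists2 K, K \in Cliques b beta t & in_clique_edges G K x y).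
Proof.
move=> _ G_half [tdD _ _] t x y Gxy x_gamma y_gamma.
rewrite !gamma'E !inE in x_gamma y_gamma.
have [_ _ edge_bag _] := tdD.
have /andP [_ /existsP [s /andP [bxs bys]]] : half_square b x y by rewrite -G_half.
have [t1 /andP [x_t1 s_t1]] := edge_bag (inl x) (inr s) bxs.
have [t2 /andP [y_t2 s_t2]] := edge_bag (inl y) (inr s) bys.
have [x_t | x_Nt] := boolP (inl x \in beta t).
  by left; left; rewrite OriginalE inE.
have s_gamma : inr s \in gamma parent beta t.
  by apply/gammaP; exists t1 => //; apply: gamma_bag_desc tdD x_gamma x_Nt x_t1.
have s_t : inr s \in beta t.
  apply: contraNT y_gamma => s_Nt; apply/gammaP; exists t2 => //.
  exact: gamma_bag_desc tdD s_gamma s_Nt s_t2.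
right; exists (nbhB b s); first by apply/imsetP; exists s; rewrite ?inE.
by split; rewrite ?inE.
Qed.
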